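(* In the setting below, let $A$ be a type over $\Gamma$ with a global element $\mathbf{c}_A:\Phi(\Gamma,A)$, and let $t,s$ be terms of type $A$ in context $\Gamma$. Then there is a global element $\mathbf{c}:\Phi(\Gamma,\mathrm{Path}_A\,t\,s)$, where $\mathrm{Path}_A\,t\,s=\Pi(i:\mathbb{I}).A[(i=0)\mapsto t,(i=1)\mapsto s]$.
   Context: Work in the internal extensional dependent type theory of a presheaf topos containing an object $\mathbb{I}$ which is internally a De Morgan algebra $(0,1,\wedge,\vee,1-\cdot)$ with $0\neq1$ and the disjunction property $i\vee j=1\Rightarrow(i=1\vee j=1)$. $\Omega$ is the type of propositions. $\mathbb{F}=\{p:\Omega\mid\exists i:\mathbb{I}.\ p=(i=1)\}$, a lattice under the operations of $\Omega$; $(i=0)$ denotes the face $((1-i)=1)$. For $\phi:\mathbb{F}$, $[\phi]$ is the subsingleton type $\mathrm{Id}_{\mathbb{F}}(\phi,\top)$. For a type $A$ and partial element $u:[\phi]\to A$, $A[\phi\mapsto u]=\Sigma(a:A).([\phi]\to\mathrm{Id}_A(a,u))$; for faces $\phi_k$ with partial elements $t_k$ agreeing on overlaps, $A[\phi_1\mapsto t_1,\dots,\phi_n\mapsto t_n]$ is $A[\phi_1\vee\dots\vee\phi_n\mapsto t]$ with $t$ the unique partial element equal to $t_k$ on $[\phi_k]$. Contexts $\Gamma$ are treated as closed types; for $\gamma:\mathbb{I}\to\Gamma$, $A(\gamma(i))$ denotes reindexing. The type of compositions is $\Phi(\Gamma,A)=\Pi(\gamma:\mathbb{I}\to\Gamma)(\phi:\mathbb{F})(u:\Pi(i:\mathbb{I}).[\phi]\to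 A(\gamma(i))).\ A(\gamma(0))[\phi\mapsto u(0)]\to A(\gamma(1))[\phi\mapsto u(1)]$. *)

(* Internal extensional type theory of the topos is
   modelled by Rocq's own type theory: types are Rocq types, Omega = Prop,
   the interval I is an arbitrary type carrying a De Morgan algebra structure. *)

Record DMAlg := {
  dI :> Type;
  d0 : dI;
  d1 : dI;
  dmeet : dI -> dI -> dI;
  djoin : dI -> dI -> dI;
  drev : dI -> dI;
  dmeetA : forall x y z, dmeet x (dmeet y z) = dmeet (dmeet x y) z;
  djoinA : forall x y z, djoin x (djoin y z) = djoin (djoin x y) z;
  dmeetC : forall x y, dmeet x y = dmeet y x;
  djoinC : forall x y, djoin x y = djoin y x;
  dmeet_absorb : forall x y, dmeet x (djoin x y) = x;
  djoin_absorb : forall x y, djoin x (dmeet x y) = x;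
  dmeet_joinDr : forall x y z, dmeet x (djoin y z) = djoin (dmeet x y) (dmeet x z);
  djoin0 : forall x, djoin x d0 = x;
  dmeet1 : forall x, dmeet x d1 = x;
  drevK : forall x, drev (drev x) = x;
  drev_meet : forall x y, drev (dmeet x y) = djoin (drev x) (drev y)
}.

Section Internal.
Variable D : DMAlg.

Definition F : Type := { p : Prop | exists i : dI D, p = (i = d1 D) }.

Definition face1 (i : dI D) : F := exist _ (i = d1 D) (ex_intro _ i eq_refl).
Definition face0 (i : dI D) : F := face1 (drev D i).

Definition topF : F := face1 (d1 D).

Definition Holds (phi : F) : Prop := phi = topF.

Definition Ext (A : Type) (phi : F) (u : Holds phi -> A) : Type :=
  { a : A & forall p : Holds phi, a = u p }.

Definition Ext2 (A : Type) (phi1 : F) (t1 : Holds phi1 -> A)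
                          (phi2 : F) (t2 : Holds phi2 -> A) : Type :=
  { a : A & ((forall p : Holds phi1, a = t1 p) * (forall p : Holds phi2, a = t2 p))%type }.

Definition Phi (Gamma : Type) (A : Gamma -> Type) : Type :=
  forall (gamma : dI D -> Gamma) (phi : F)
         (u : forall i : dI D, Holds phi -> A (gamma i)),
    Ext (A (gamma (d0 D))) phi (u (d0 D)) ->
    Ext (A (gamma (d1 D))) phi (u (d1 D)).

Definition PathT (Gamma : Type) (A : Gamma -> Type) (t s : forall g, A g)
  : Gamma -> Type :=
  fun g => forall i : dI D,
    Ext2 (A g) (face0 i) (fun _ => t g) (face1 i) (fun _ => s g).

End Internal.

(* For each j the path value at the lid is obtained by one composition in A
   along the face phi \/ (j = 0) \/ (j = 1), with the partial element glued
   from the given path on phi and from t, s on the two ends.  The disjunction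
   property makes this join a face again, 0 <> 1 makes the two ends disjoint,
   and gluing partial elements on a join of faces is done by case analysis on
   the (classical) propositions [Holds phi]. *)

From Stdlib Require Import ClassicalEpsilon ProofIrrelevance
  FunctionalExtensionality PropExtensionality.

Section DeMorgan.
Variable D : DMAlg.

Lemma djoin1l (x : dI D) : djoin D (d1 D) x = d1 D.
Proof.
  rewrite <- (djoin_absorb D (d1 D) x) at 2.
  rewrite dmeetC, dmeet1; reflexivity.
Qed.

Lemma djoin1r (x : dI D) : djoin D x (d1 D) = d1 D.
Proof. rewrite djoinC; apply djoin1l. Qed.

Lemma drev1 : drev D (d1 D) = d0 D.
Proof.
  pose proof (drev_meet D (d1 D) (drev D (d0 D))) as H.
  rewrite drevK, djoin0, dmeetC, dmeet1, drevK in H.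
  symmetry; exact H.
Qed.

End DeMorgan.

Section Faces.
Variable D : DMAlg.
Hypothesis Hdisj : forall i j : dI D, djoin D i j = d1 D -> i = d1 D \/ j = d1 D.

Lemma HoldsE (phi : F D) : Holds D phi <-> proj1_sig phi.
Proof.
  destruct phi as [P HP]; unfold Holds, topF, face1; simpl; split.
  - intro H; apply (f_equal (@proj1_sig _ _)) in H; simpl in H.
    rewrite H; reflexivity.
  - intro p.
    assert (E : P = (d1 D = d1 D)) by (apply propositional_extensionality; tauto).
    subst P; f_equal; apply proof_irrelevance.
Qed.

Lemma Fjoin_is_face (phi psi : F D) :
  exists k : dI D, (proj1_sig phi \/ proj1_sig psi) = (k = d1 D).
Proof.
  destruct phi as [P [i ->]], psi as [Q [j ->]]; simpl.
  exists (djoin D i j); apply propositional_extensionality; split.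
  - intros [-> | ->]; [apply djoin1l | apply djoin1r].
  - apply Hdisj.
Qed.

Definition Fjoin (phi psi : F D) : F D :=
  exist _ (proj1_sig phi \/ proj1_sig psi) (Fjoin_is_face phi psi).

Lemma Holds_join (phi psi : F D) :
  Holds D (Fjoin phi psi) <-> Holds D phi \/ Holds D psi.
Proof. rewrite !HoldsE; reflexivity. Qed.

Lemma Holds_joinl (phi psi : F D) : Holds D phi -> Holds D (Fjoin phi psi).
Proof. intro h; apply Holds_join; left; exact h. Qed.

Lemma Holds_joinr (phi psi : F D) : Holds D psi -> Holds D (Fjoin phi psi).
Proof. intro h; apply Holds_join; right; exact h. Qed.

Section Glue.
Variables (X : Type) (phi psi : F D).
Variables (u : Holds D phi -> X) (v : Holds D psi -> X).

Definition glue (p : Holds D (Fjoin phi psi)) : X :=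
  match excluded_middle_informative (Holds D phi) with
  | left hp => u hp
  | right nphi =>
      match excluded_middle_informative (Holds D psi) with
      | left hq => v hq
      | right npsi =>
          False_rect X (match proj1 (Holds_join phi psi) p with
                        | or_introl hp => nphi hp
                        | or_intror hq => npsi hq
                        end)
      end
  end.

Lemma glue_l (hp : Holds D phi) (p : Holds D (Fjoin phi psi)) : glue p = u hp.
Proof.
  unfold glue; destruct (excluded_middle_informative (Holds D phi)) as [h | n].
  - f_equal; apply proof_irrelevance.
  - contradiction.
Qed.

Hypothesis uv_compat : forall hp hq, u hp = v hq.

Lemma glue_r (hq : Holds D psi) (p : Holds D (Fjoin phi psi)) : glue p = v hq.
Proof.
  unfold glue; destruct (excluded_middle_informative (Holds D phi)) as [h | nphi].
  - apply uv_compat.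
  - destruct (excluded_middle_informative (Holds D psi)) as [h | n].
    + f_equal; apply proof_irrelevance.
    + contradiction.
Qed.

End Glue.

Arguments glue {X phi psi} u v p.

Section GlueAgree.
Variables (X : Type) (phi psi : F D).
Variables (u : Holds D phi -> X) (v : Holds D psi -> X) (a : X).

Lemma agrees_glue :
  (forall hp, a = u hp) -> (forall hq, a = v hq) -> forall p, a = glue u v p.
Proof.
  intros Hu Hv p; unfold glue.
  destruct (excluded_middle_informative (Holds D phi)); [apply Hu |].
  destruct (excluded_middle_informative (Holds D psi)); [apply Hv |].
  exfalso; apply Holds_join in p; tauto.
Qed.

Hypothesis Ha : forall p, a = glue u v p.

Lemma glue_agrees_l (hp : Holds D phi) : a = u hp.
Proof. rewrite (Ha (Holds_joinl phi psi hp)); apply glue_l. Qed.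

Lemma glue_agrees_r (uv_compat : forall hp hq, u hp = v hq) (hq : Holds D psi) :
  a = v hq.
Proof. rewrite (Ha (Holds_joinr phi psi hq)); apply glue_r; exact uv_compat. Qed.

End GlueAgree.

Arguments glue_agrees_l {X phi psi u v a} Ha hp.
Arguments glue_agrees_r {X phi psi u v a} Ha uv_compat hq.

Lemma Ext2_agrees_glue (X : Type) (phi psi : F D) (t1 : Holds D phi -> X)
  (t2 : Holds D psi -> X) (e : Ext2 D X phi t1 psi t2) :
  forall p, projT1 e = glue t1 t2 p.
Proof. destruct e as [a [h1 h2]]; apply agrees_glue; assumption. Qed.

Definition Ext2_of_glue (X : Type) (phi psi : F D) (t1 : Holds D phi -> X)
  (t2 : Holds D psi -> X) (compat : forall hp hq, t1 hp = t2 hq)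
  (a : X) (Ha : forall p, a = glue t1 t2 p) : Ext2 D X phi t1 psi t2 :=
  existT _ a (pair (glue_agrees_l Ha) (glue_agrees_r Ha compat)).

Arguments Ext2_of_glue {X phi psi t1 t2} compat {a} Ha.

Lemma Ext2_ext (X : Type) (phi psi : F D) (t1 : Holds D phi -> X)
  (t2 : Holds D psi -> X) (e1 e2 : Ext2 D X phi t1 psi t2) :
  projT1 e1 = projT1 e2 -> e1 = e2.
Proof.
  destruct e1 as [a [h1 h2]], e2 as [b [k1 k2]]; simpl; intros <-.
  f_equal; f_equal; apply proof_irrelevance.
Qed.

Definition boundary (j : dI D) : F D := Fjoin (face0 D j) (face1 D j).

Hypothesis H01 : d0 D <> d1 D.

Lemma faces01_disjoint (j : dI D) : Holds D (face0 D j) -> Holds D (face1 D j) -> False.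
Proof.
  intros h0 h1; apply HoldsE in h0, h1; simpl in h0, h1.
  subst j; rewrite drev1 in h0; exact (H01 h0).
Qed.

Section PathComposition.
Variables (Gamma : Type) (A : Gamma -> Type) (cA : Phi D Gamma A).
Variables (t s : forall g : Gamma, A g).
Variables (gamma : dI D -> Gamma) (phi : F D).
Variable u : forall i : dI D, Holds D phi -> PathT D Gamma A t s (gamma i).
Variable a0 : Ext D (PathT D Gamma A t s (gamma (d0 D))) phi (u (d0 D)).

Definition ends (j i : dI D) : Holds D (boundary j) -> A (gamma i) :=
  glue (fun _ => t (gamma i)) (fun _ => s (gamma i)).

Lemma ends_compat (j i : dI D) (h0 : Holds D (face0 D j)) (h1 : Holds D (face1 D j)) :
  t (gamma i) = s (gamma i).
Proof. destruct (faces01_disjoint j h0 h1). Qed.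

Definition tube (j i : dI D) : Holds D (Fjoin phi (boundary j)) -> A (gamma i) :=
  glue (fun q => projT1 (u i q j)) (ends j i).

Lemma tube_compat (j i : dI D) (q : Holds D phi) (p : Holds D (boundary j)) :
  projT1 (u i q j) = ends j i p.
Proof. apply Ext2_agrees_glue. Qed.

Definition tube_base (j : dI D) : Ext D (A (gamma (d0 D))) _ (tube j (d0 D)).
Proof.
  exists (projT1 (projT1 a0 j)); apply agrees_glue.
  - intro q; rewrite (projT2 a0 q); reflexivity.
  - apply Ext2_agrees_glue.
Defined.

Definition tube_lid (j : dI D) : Ext D (A (gamma (d1 D))) _ (tube j (d1 D)) :=
  cA gamma _ (tube j) (tube_base j).

Definition lid_path : PathT D Gamma A t s (gamma (d1 D)) := fun j =>
  Ext2_of_glue (ends_compat j (d1 D)) (glue_agrees_r (projT2 (tube_lid j))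
                                                    (tube_compat j (d1 D))).

Lemma lid_path_agrees (q : Holds D phi) : lid_path = u (d1 D) q.
Proof.
  apply functional_extensionality_dep; intro j; apply Ext2_ext.
  exact (glue_agrees_l (projT2 (tube_lid j)) q).
Qed.

End PathComposition.

End Faces.

Arguments lid_path {D} Hdisj H01 {Gamma A} cA {t s gamma phi u} a0.

Theorem mainTheorem18 (D : DMAlg)
  (H01 : d0 D <> d1 D)
  (Hdisj : forall i j : dI D, djoin D i j = d1 D -> i = d1 D \/ j = d1 D)
  (Gamma : Type) (A : Gamma -> Type) (cA : Phi D Gamma A)
  (t s : forall g : Gamma, A g) :
  Phi D Gamma (PathT D Gamma A t s).
Proof.
  intros gamma phi u a0.
  exists (lid_path Hdisj H01 cA a0).
  apply lid_path_agrees.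
Qed.
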